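(* Let $X$ be a real random variable with finite cumulative information generating function (CIGF), and let $Y=\gamma X+\delta$ with $\gamma\in\mathbb{R}\setminus\{0\}$ and $\delta\in\mathbb{R}$. Then $$G_Y(\alpha,\beta)=\begin{cases}\gamma\,G_X(\alpha,\beta), & 0<\gamma<\infty,\\ |\gamma|\,G_X(\beta,\alpha), & -\infty<\gamma<0,\end{cases}$$ for $(\alpha,\beta)\in D_X$ if $0<\gamma<\infty$, and for $(\beta,\alpha)\in D_X$ if $-\infty<\gamma<0$.
   Context: For a random variable $X$ with CDF $F(x)=\mathbb{P}(X\le x)$ and survival function $\overline F(x)=1-F(x)$, let $l=\inf\{x\in\mathbb{R}:F(x)>0\}$ and $r=\sup\{x\in\mathbb{R}:\overline F(x)>0\}$ (possibly infinite). The cumulative information generating function (CIGF) of $X$ is $G_X(\alpha,\beta)=\int_l^r [F(x)]^\alpha[\overline F(x)]^\beta\,dx$, defined on $D_X=\{(\alpha,\beta)\in\mathbb{R}^2: G_X(\alpha,\beta)<+\infty\}$. *)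

From HB Require Import structures.
From mathcomp Require Import all_boot all_order all_algebra.
From mathcomp Require Import all_classical all_reals all_analysis.
Set Implicit Arguments. Unset Strict Implicit. Unset Printing Implicit Defensive.
Import Order.TTheory GRing.Theory Num.Theory.
Local Open Scope classical_set_scope.
Local Open Scope ring_scope.

Section cigf.
Context d {T : measurableType d} {R : realType} (P : probability T R).

Definition cdfR (X : {RV P >-> R}) (x : R) : R := fine (cdf X x).

Definition survR (X : {RV P >-> R}) (x : R) : R := 1 - cdfR X x.

Definition supp_l (X : {RV P >-> R}) : \bar R :=
  ereal_inf [set x%:E | x in [set x : R | 0 < cdfR X x]].
Definition supp_r (X : {RV P >-> R}) : \bar R :=
  ereal_sup [set x%:E | x in [set x : R | 0 < survR X x]].

Definition CIGF (X : {RV P >-> R}) (a b : R) : \bar R :=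
  (\int[lebesgue_measure]_(x in [set x : R | (supp_l X < x%:E)%E /\ (x%:E < supp_r X)%E])
     ((cdfR X x) `^ a * (survR X x) `^ b)%:E)%E.

Definition CIGF_dom (X : {RV P >-> R}) : set (R * R) :=
  [set ab | (CIGF X ab.1 ab.2 < +oo)%E].
End cigf.

(* Substituting y = gamma x + delta turns the integral defining G_Y into
   |gamma| times an integral over the support interval of X.  For gamma > 0
   the cdf of Y at gamma x + delta is F_X(x).  For gamma < 0 it is
   1 - P(X < x), so F and 1 - F exchange roles; P(X < x) differs from F_X(x)
   only at the atoms of X, a countable and hence Lebesgue-null set. *)

From HB Require Import structures.
From mathcomp Require Import all_boot all_order all_algebra.
From mathcomp Require Import all_classical all_reals all_analysis.
From mathcomp Require Import ring lra measurable_realfun.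
Import Order.TTheory GRing.Theory Num.Theory.
Local Open Scope classical_set_scope.
Local Open Scope ring_scope.

Section affine_change_of_variables.
Context {R : realType} (a b : R).
Hypothesis a0 : a != 0.
Local Notation affine := (fun x : R => a * x + b).

Lemma affineK : cancel (fun y => a^-1 * (y - b)) affine.
Proof. by move=> y; rewrite mulrA mulfV // mul1r subrK. Qed.

Lemma measurable_affine : measurable_fun [set: R] (affine : R -> measurableTypeR R).
Proof. by apply: measurable_funD => //; exact: mulrl_measurable. Qed.

Lemma affine_preimage_itv_oc (u v : R) : affine @^-1` `]affine u, affine v] =
  if 0 < a then `]u, v]%classic else `[v, u[%classic.
Proof.
move: a0; case: ltrgt0P => // [a_gt0|a_lt0] _; apply/seteqP;
  split => x /=; rewrite !in_itv /= !ltrD2r !lerD2r.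
- by rewrite ltr_pM2l ?ler_pM2l.
- by rewrite ltr_pM2l ?ler_pM2l.
- by rewrite ltr_nM2l ?ler_nM2l // andbC.
- by rewrite ltr_nM2l ?ler_nM2l // andbC.
Qed.

Lemma lebesgue_measure_affine_preimage (A : set R) : measurable A ->
  lebesgue_measure (affine @^-1` A) = (`|a|^-1%:E * lebesgue_measure A)%E.
Proof.
(* The measure instance of [pushforward] is parameterized by the
   measurability proof, hence the applications [mu measurable_affine]. *)
move=> mA; pose mu := mscale (NngNum (normr_ge0 a))
  (pushforward lebesgue_measure (affine : _ -> measurableTypeR R)).
have -> : lebesgue_measure A = mu measurable_affine A.
  (* [mu] agrees with the Lebesgue measure on the generating intervals. *)
  apply: lebesgue_measure_unique => // _ [[s t] _ <-] /=.
  have := affine_preimage_itv_oc (a^-1 * (s - b)) (a^-1 * (t - b)).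
  rewrite !affineK /mu /mscale /= /pushforward => ->.
  move: (a0); case: ltrgt0P => // a_sgn _.
  - rewrite !lebesgue_measure_itv /= !lte_fin ltr_pM2l ?invr_gt0 // ltrD2r.
    by case: ifPn => _; rewrite ?mule0 // -!EFinD -EFinM; congr EFin; field.
  - rewrite !lebesgue_measure_itv /= !lte_fin ltr_nM2l ?invr_lt0 // ltrD2r.
    by case: ifPn => _; rewrite ?mule0 // -!EFinD -EFinM; congr EFin; field.
by rewrite /mu /= muleA -EFinM mulVf ?mul1e // normr_eq0.
Qed.

Lemma ge0_integral_affine_preimage (E : set R) (f : R -> \bar R) :
  measurable E -> measurable_fun E f -> (forall y, E y -> (0 <= f y)%E) ->
  (\int[lebesgue_measure]_(y in E) f y =
   `|a|%:E * \int[lebesgue_measure]_(x in affine @^-1` E) f (affine x))%E.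
Proof.
(* With [maffine] in the context the pushforward measure instance is found. *)
move=> mE mf f0; have maffine := measurable_affine.
have f0' : {in E, forall y, (0 <= f y)%E} by move=> y /set_mem /f0.
have := @ge0_integral_pushforward _ _ (measurableTypeR R) (measurableTypeR R) R
  _ maffine lebesgue_measure E f mE mf f0'.
have inv_norm_ge0 : 0 <= `|a|^-1 by rewrite invr_ge0.
rewrite (eq_measure_integral (mscale (NngNum inv_norm_ge0) lebesgue_measure))
  => [|A mA _]; last exact: lebesgue_measure_affine_preimage.
rewrite ge0_integral_mscale //= => pushE.
transitivity (`|a|%:E * (`|a|^-1%:E * \int[lebesgue_measure]_(y in E) f y))%E.
  by rewrite muleA -EFinM mulfV ?mul1e // normr_eq0.
exact: congr1 pushE.
Qed.

End affine_change_of_variables.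

Lemma ereal_inf_EFin_ltP {R : realType} (S : set R) (y : R) :
  (ereal_inf (EFin @` S) < y%:E)%E <-> exists2 z, S z & z < y.
Proof.
split.
- by move=> /ereal_inf_lt[_ [z Sz <-]]; rewrite lte_fin => zy; exists z.
- move=> [z Sz zy]; apply: (@le_lt_trans _ _ z%:E); last by rewrite lte_fin.
  by apply: ereal_inf_lbound; exists z.
Qed.

Lemma ereal_sup_EFin_gtP {R : realType} (S : set R) (y : R) :
  (y%:E < ereal_sup (EFin @` S))%E <-> exists2 z, S z & y < z.
Proof.
split.
- by move=> /ereal_sup_gt[_ [z Sz <-]]; rewrite lte_fin => yz; exists z.
- move=> [z Sz yz]; apply: (@lt_le_trans _ _ z%:E); first by rewrite lte_fin.
  by apply: ereal_sup_ubound; exists z.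
Qed.

Lemma exists2_mono_can {T U : Type} {f : T -> U} {f' : U -> T}
    {r : rel T} {s : rel U} {P : U -> Prop} {Q : T -> Prop} {x : T} :
  cancel f' f -> {mono f : u v / r u v >-> s u v} ->
  (forall u, P (f u) <-> Q u) ->
  (exists2 z, s z (f x) & P z) <-> (exists2 u, r u x & Q u).
Proof.
move=> f'K f_mono PQ; split=> [[z szfx Pz]|[u rux Qu]].
  by exists (f' z); [rewrite -f_mono f'K | apply/PQ; rewrite f'K].
by exists (f u); [rewrite f_mono | apply/PQ].
Qed.

Lemma measurable_cigf_integrand {R : realType} (D : set R) (F : R -> R)
    (a b : R) : measurable_fun [set: R] F ->
  measurable_fun D (fun x => (F x `^ a * (1 - F x) `^ b)%:E).
Proof.
move=> mF; apply/measurable_funTS/measurable_EFinP/measurable_funM.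
- exact: measurableT_comp (measurable_powR _) mF.
- by apply: measurableT_comp (measurable_powR _) _; exact: measurable_funB.
Qed.

Section left_limit_of_cdf.
Context {d} {T : measurableType d} {R : realType} {P : probability T R}.
Variable X : {RV P >-> R}.

Definition lcdfR (x : R) : R := fine (distribution P X `]-oo, x[).

Let fine_distribution_le (A B : set R) : measurable A -> measurable B ->
  A `<=` B -> fine (distribution P X A) <= fine (distribution P X B).
Proof. by move=> mA mB AB; rewrite fine_le ?fin_num_measure // le_measure // inE. Qed.

Lemma lcdfR_le_cdfR (x : R) : lcdfR x <= cdfR X x.
Proof. by apply: fine_distribution_le => // y /=; rewrite !in_itv /= => /ltW. Qed.

Lemma cdfR_le_lcdfR (x y : R) : x < y -> cdfR X x <= lcdfR y.
Proof.
move=> xy; apply: fine_distribution_le => // z /=; rewrite !in_itv /=.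
by move=> /le_lt_trans; apply.
Qed.

Lemma measurable_cdfR : measurable_fun [set: R] (cdfR X).
Proof.
apply: nondecreasing_measurable => // x y xy; apply: fine_distribution_le => //.
by move=> z /=; rewrite !in_itv /= => /le_trans; apply.
Qed.

Lemma measurable_lcdfR : measurable_fun [set: R] lcdfR.
Proof.
apply: nondecreasing_measurable => // x y xy; apply: fine_distribution_le => //.
by move=> z /=; rewrite !in_itv /= => /lt_le_trans; apply.
Qed.

Lemma cdfR_lcdfR_pmf (x : R) : cdfR X x = lcdfR x + pmf X x.
Proof.
rewrite /cdfR /cdf.
have -> : `]-oo, x]%classic = `]-oo, x[%classic `|` [set x] :> set R.
  by rewrite setUitv1.
rewrite measureU //; last first.
  by rewrite -subset0 => y [+ /= yx]; rewrite yx /= in_itv /= ltxx.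
by rewrite fineD ?fin_num_measure.
Qed.

Lemma lcdfR_ae_eq_cdfR (D : set R) : ae_eq lebesgue_measure D lcdfR (cdfR X).
Proof.
exists [set x | 0 < pmf X x]; split.
- exact: countable_measurable (pmf_gt0_countable X).
- exact: countable_lebesgue_measure0 (pmf_gt0_countable X).
move=> x /= /not_implyP[_]; rewrite cdfR_lcdfR_pmf lt_neqAle pmf_ge0 andbT.
by move=> lcdfR_neq; apply/eqP => pmf0; apply: lcdfR_neq; rewrite -pmf0 addr0.
Qed.

End left_limit_of_cdf.

Definition supp_itv {d} {T : measurableType d} {R : realType}
    {P : probability T R} (X : {RV P >-> R}) : set R :=
  [set x : R | (supp_l X < x%:E)%E /\ (x%:E < supp_r X)%E].

Section support_interval.
Context {d} {T : measurableType d} {R : realType} {P : probability T R}.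
Variable X : {RV P >-> R}.

Lemma measurable_supp_itv : measurable (supp_itv X).
Proof.
apply: is_interval_measurable => x y [lx _] [_ ry] z /andP[xz zy]; split.
- by apply: (lt_le_trans lx); rewrite lee_fin.
- by apply: (le_lt_trans _ ry); rewrite lee_fin.
Qed.

Lemma supp_itvP (x : R) : supp_itv X x <->
  (exists2 z, z < x & 0 < cdfR X z) /\ (exists2 z, x < z & cdfR X z < 1).
Proof.
rewrite /supp_itv /supp_l /supp_r /= ereal_inf_EFin_ltP ereal_sup_EFin_gtP.
split=> -[[z z0 zx] [w w1 xw]]; (split; first by exists z); exists w => //.
- by move: w1; rewrite /= /survR subr_gt0.
- by rewrite /= /survR subr_gt0.
Qed.

Lemma supp_itv_lcdfRP (x : R) : supp_itv X x <->
  (exists2 z, z < x & 0 < lcdfR X z) /\ (exists2 z, x < z & lcdfR X z < 1).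
Proof.
rewrite supp_itvP; split=> -[[z zx z0] [w xw w1]]; split.
- exists ((z + x) / 2); first lra.
  by apply: (lt_le_trans z0); apply: cdfR_le_lcdfR; lra.
- by exists w => //; apply: le_lt_trans w1; exact: lcdfR_le_cdfR.
- by exists z => //; apply: (lt_le_trans z0); exact: lcdfR_le_cdfR.
- exists ((x + w) / 2); first lra.
  by apply: le_lt_trans w1; apply: cdfR_le_lcdfR; lra.
Qed.

End support_interval.

Section affine_transform.
Context {d} {T : measurableType d} {R : realType} {P : probability T R}.
Context {X Y : {RV P >-> R}} {g c : R}.
Hypothesis hY : forall t, Y t = g * X t + c.

Lemma cdfR_affine_gt0 : 0 < g -> forall x, cdfR Y (g * x + c) = cdfR X x.
Proof.
move=> g_gt0 x; rewrite /cdfR /cdf /distribution /pushforward.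
by congr (fine (P _)); apply/seteqP; split => t /=; rewrite !in_itv /= hY lerD2r ler_pM2l.
Qed.

Lemma cdfR_affine_lt0 : g < 0 -> forall x, cdfR Y (g * x + c) = 1 - lcdfR X x.
Proof.
move=> g_lt0 x; rewrite /cdfR /lcdfR /cdf /distribution /pushforward.
have -> : Y @^-1` `]-oo, g * x + c] = ~` (X @^-1` `]-oo, x[).
  by apply/seteqP; split => t /=; rewrite !in_itv /= hY lerD2r ler_nM2l // leNgt => /negP.
set A := X @^-1` _; have mA : measurable A by exact: measurable_funPTI.
by rewrite probability_setC // -[P A]fineK ?fin_num_measure // -EFinB.
Qed.

Hypothesis g0 : g != 0.
Local Notation affine := (fun x => g * x + c).

Lemma supp_itv_affine_gt0 : 0 < g -> affine @^-1` supp_itv Y = supp_itv X.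
Proof.
move=> g_gt0; have lt_affine : {mono affine : u v / u < v}.
  by move=> u v; rewrite ltrD2r ltr_pM2l.
apply/predeqP => x; rewrite /preimage /= !supp_itvP.
have lower : (exists2 z, z < g * x + c & 0 < cdfR Y z) <->
    (exists2 u, u < x & 0 < cdfR X u).
  by apply: exists2_mono_can (affineK g c g0) lt_affine _ => u; rewrite cdfR_affine_gt0.
have upper : (exists2 z, g * x + c < z & cdfR Y z < 1) <->
    (exists2 u, x < u & cdfR X u < 1).
  apply: (exists2_mono_can (r := fun u v => v < u) (s := fun u v => v < u)
    (affineK g c g0)) => [u v|u]; [exact: lt_affine | by rewrite cdfR_affine_gt0].
by rewrite lower upper.
Qed.

Lemma supp_itv_affine_lt0 : g < 0 -> affine @^-1` supp_itv Y = supp_itv X.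
Proof.
move=> g_lt0; have lt_affine : {mono affine : u v /~ u < v}.
  by move=> u v; rewrite ltrD2r ltr_nM2l.
apply/predeqP => x; rewrite /preimage /= supp_itvP supp_itv_lcdfRP and_comm.
have lower : (exists2 z, z < g * x + c & 0 < cdfR Y z) <->
    (exists2 u, x < u & lcdfR X u < 1).
  apply: (exists2_mono_can (r := fun u v => v < u) (affineK g c g0)) => [u v|u].
    exact: lt_affine.
  by rewrite cdfR_affine_lt0 // subr_gt0.
have upper : (exists2 z, g * x + c < z & cdfR Y z < 1) <->
    (exists2 u, u < x & 0 < lcdfR X u).
  apply: (exists2_mono_can (s := fun u v => v < u) (affineK g c g0)) => [u v|u].
    exact: lt_affine.
  by rewrite cdfR_affine_lt0 // ltrBlDl ltrDr.
by rewrite lower upper.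
Qed.

End affine_transform.

Lemma CIGF_affine {d} {T : measurableType d} {R : realType}
    {P : probability T R} {X Y : {RV P >-> R}} {g c : R} (a b : R) : g != 0 ->
  (fun x => g * x + c) @^-1` supp_itv Y = supp_itv X ->
  CIGF Y a b = (`|g|%:E * \int[lebesgue_measure]_(x in supp_itv X)
    (cdfR Y (g * x + c)%R `^ a * survR Y (g * x + c)%R `^ b)%:E)%E.
Proof.
move=> g0 suppE; rewrite -suppE; apply: ge0_integral_affine_preimage => //.
- exact: measurable_supp_itv.
- by apply: measurable_cigf_integrand; exact: measurable_cdfR.
- by move=> y _; rewrite lee_fin mulr_ge0 ?powR_ge0.
Qed.

Lemma CIGF_lcdfR {d} {T : measurableType d} {R : realType}
    {P : probability T R} (X : {RV P >-> R}) (a b : R) :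
  CIGF X a b = (\int[lebesgue_measure]_(x in supp_itv X)
    (lcdfR X x `^ a * (1 - lcdfR X x) `^ b)%:E)%E.
Proof.
apply/esym/ge0_ae_eq_integral.
- exact: measurable_supp_itv.
- by apply: measurable_cigf_integrand; exact: measurable_lcdfR.
- by apply: measurable_cigf_integrand; exact: measurable_cdfR.
- by move=> y _; rewrite lee_fin mulr_ge0 ?powR_ge0.
- by move=> y _; rewrite lee_fin mulr_ge0 ?powR_ge0.
- by apply: filterS (lcdfR_ae_eq_cdfR X (supp_itv X)) => x + Dx => /(_ Dx) ->.
Qed.

Theorem theorem1 (d : measure_display) (T : measurableType d) (R : realType)
  (P : probability T R) (X Y : {RV P >-> R}) (gamma delta : R)
  (hgamma : gamma != 0) (hY : forall t, Y t = gamma * X t + delta) :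
  (0 < gamma -> forall alpha beta : R, (alpha, beta) \in CIGF_dom X ->
     CIGF Y alpha beta = (gamma%:E * CIGF X alpha beta)%E) /\
  (gamma < 0 -> forall alpha beta : R, (beta, alpha) \in CIGF_dom X ->
     CIGF Y alpha beta = (`|gamma|%:E * CIGF X beta alpha)%E).
Proof.
(* Both sides are integrals with values in [0, +oo]. *)
split=> [g_gt0 a b _|g_lt0 a b _].
- rewrite (CIGF_affine a b hgamma (supp_itv_affine_gt0 hY hgamma g_gt0)).
  apply: congr2; first by rewrite gtr0_norm.
  by apply: eq_integral => x _; rewrite /survR (cdfR_affine_gt0 hY).
- rewrite (CIGF_affine a b hgamma (supp_itv_affine_lt0 hY hgamma g_lt0)).
  (* not [congr]: it would try to close the integral equation by conversion *)
  apply: congr2; first by [].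
  rewrite CIGF_lcdfR; apply: eq_integral => x _.
  by rewrite /survR (cdfR_affine_lt0 hY) // subKr mulrC.
Qed.
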